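(* Let $\mathcal{D}$ be a category with all pullbacks, and let $\mathcal{C}$ be a full subcategory of $\mathcal{D}$ that is equal to its essential image (closed under isomorphism), with the property that for any object $A$ of $\mathcal{C}$ and any object $B$ of $\mathcal{D}$, if $\mathrm{Hom}_{\mathcal{D}}(B,A)\neq\varnothing$ then $B$ is in $\mathcal{C}$. Let $\mathcal{D}'$ be the full subcategory of $\mathcal{D}$ on the objects not in $\mathcal{C}$. Then $\mathrm{Tw}(\mathcal{D}')$ has all pullbacks.
   Context: For a category $\mathcal{D}$, the Grothendieck twist $\mathrm{Tw}(\mathcal{D})$ is the category whose objects are finite families $\{a_i\}_{i\in I}$ ($I$ a finite set, each $a_i$ an object of $\mathcal{D}$), and whose morphisms $\{a_i\}_{i\in I}\to\{b_j\}_{j\in J}$ are pairs consisting of a function $f:I\to J$ and morphisms $F_i:a_i\to b_{f(i)}$ in $\mathcal{D}$ for all $i\in I$; composition composes set maps and components. *)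

From mathcomp Require Import all_boot.
From Stdlib Require Import FunctionalExtensionality.
Set Implicit Arguments. Unset Strict Implicit. Unset Printing Implicit Defensive.

Record Category := {
  Ob :> Type;
  Hom : Ob -> Ob -> Type;
  idm : forall x, Hom x x;
  comp : forall x y z, Hom y z -> Hom x y -> Hom x z;
  comp_assoc : forall x y z w (h : Hom z w) (g : Hom y z) (f : Hom x y),
      comp h (comp g f) = comp (comp h g) f;
  comp_id_l : forall x y (f : Hom x y), comp (idm y) f = f;
  comp_id_r : forall x y (f : Hom x y), comp f (idm x) = f }.

Arguments Hom {C} : rename.
Arguments idm {C} : rename.
Arguments comp {C x y z} : rename.

Definition isomorphic (C : Category) (x y : C) : Prop :=
  exists (f : Hom x y) (g : Hom y x), comp g f = idm x /\ comp f g = idm y.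

Definition is_pullback (C : Category) (X Y Z : C) (f : Hom X Z) (g : Hom Y Z)
    (P : C) (p1 : Hom P X) (p2 : Hom P Y) : Prop :=
  comp f p1 = comp g p2 /\
  forall (Q : C) (q1 : Hom Q X) (q2 : Hom Q Y), comp f q1 = comp g q2 ->
    exists! u : Hom Q P, comp p1 u = q1 /\ comp p2 u = q2.

Definition has_pullbacks (C : Category) : Prop :=
  forall (X Y Z : C) (f : Hom X Z) (g : Hom Y Z),
    exists (P : C) (p1 : Hom P X) (p2 : Hom P Y), is_pullback f g p1 p2.

Definition FullSub (D : Category) (P : D -> Prop) : Category :=
  {| Ob := {x : D | P x};
     Hom := fun x y => Hom (proj1_sig x) (proj1_sig y);
     idm := fun x => idm (proj1_sig x);
     comp := fun x y z g f => comp g f;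
     comp_assoc := fun x y z w h g f => comp_assoc h g f;
     comp_id_l := fun x y f => comp_id_l f;
     comp_id_r := fun x y f => comp_id_r f |}.

(* Grothendieck twist Tw(D): objects are finite families {a_i}_{i in I},
   I a finite set (a finType); morphisms are a map f : I -> J with
   components F_i : a_i -> b_{f i}. *)
Record TwOb (D : Category) := TwFam { tw_idx : finType; tw_fam : tw_idx -> D }.
Arguments tw_idx {D} A : rename.
Arguments tw_fam {D} A i : rename.

Record TwHom (D : Category) (A B : TwOb D) := TwMor {
  tw_map : tw_idx A -> tw_idx B;
  tw_cmp : forall i, Hom (tw_fam A i) (tw_fam B (tw_map i)) }.
Arguments tw_map {D A B} F i : rename.
Arguments tw_cmp {D A B} F i : rename.

Definition tw_id (D : Category) (A : TwOb D) : TwHom A A :=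
  @TwMor D A A (fun i => i) (fun i => idm (tw_fam A i)).

Definition tw_comp (D : Category) (A B C : TwOb D)
    (G : TwHom B C) (F : TwHom A B) : TwHom A C :=
  @TwMor D A C (fun i => tw_map G (tw_map F i))
    (fun i => comp (tw_cmp G (tw_map F i)) (tw_cmp F i)).

Lemma tw_comp_assoc (D : Category) (A B C E : TwOb D)
  (H : TwHom C E) (G : TwHom B C) (F : TwHom A B) :
  tw_comp H (tw_comp G F) = tw_comp (tw_comp H G) F.
Proof.
rewrite /tw_comp /=; f_equal; apply: functional_extensionality_dep => i.
exact: comp_assoc.
Qed.

Lemma tw_comp_id_l (D : Category) (A B : TwOb D) (F : TwHom A B) :
  tw_comp (tw_id B) F = F.
Proof.
case: F => f F; rewrite /tw_comp /=; f_equal.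
apply: functional_extensionality_dep => i; exact: comp_id_l.
Qed.

Lemma tw_comp_id_r (D : Category) (A B : TwOb D) (F : TwHom A B) :
  tw_comp F (tw_id A) = F.
Proof.
case: F => f F; rewrite /tw_comp /=; f_equal.
apply: functional_extensionality_dep => i; exact: comp_id_r.
Qed.

Definition Tw (D : Category) : Category :=
  {| Ob := TwOb D; Hom := @TwHom D; idm := @tw_id D; comp := @tw_comp D;
     comp_assoc := @tw_comp_assoc D; comp_id_l := @tw_comp_id_l D;
     comp_id_r := @tw_comp_id_r D |}.

(* In Tw(E) a pullback of F : A -> C and G : B -> C is assembled componentwise:
   its index set is the set of pairs (i, j) with F i = G j whose component
   cospan A_i -> C_(F i) <- B_j has a pullback in E.  A pair whose cospan has
   no cone at all can be dropped: no component of a cone over the Tw-cospan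
   can sit over it.
   In D' every cospan is of one of these two kinds: its pullback P in D either
   lies in D', or lies in C and then so does every cone, which maps to P. *)
From Pilot Require Import Defs.
From mathcomp Require Import all_boot.
From Stdlib Require Import Classical ClassicalEpsilon FunctionalExtensionality Eqdep.
Set Implicit Arguments. Unset Strict Implicit. Unset Printing Implicit Defensive.
Local Notation comp := Defs.comp.

Definition oget (T : Type) (o : option T) : isSome o -> T :=
  match o as o0 return isSome o0 -> T with
  | Some x => fun _ => x
  | None => fun h => False_rect T (notF h)
  end.

Definition pullback_or_no_cone (E : Category) : Prop :=
  forall (X Y Z : E) (f : Hom X Z) (g : Hom Y Z),
    (exists (P : E) (p1 : Hom P X) (p2 : Hom P Y), is_pullback f g p1 p2) \/
    (forall (Q : E) (q1 : Hom Q X) (q2 : Hom Q Y), comp f q1 <> comp g q2).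

Section TwArrow.
Variables (E : Category) (A B : TwOb E).

Definition tw_arrow (F : TwHom A B) (i : tw_idx A) :
    {b : tw_idx B & Hom (tw_fam A i) (tw_fam B b)} :=
  existT _ (tw_map F i) (tw_cmp F i).

Lemma tw_hom_ext (F G : TwHom A B) :
  (forall i, tw_arrow F i = tw_arrow G i) -> F = G.
Proof.
case: F => f Fc; case: G => g Gc /= eqFG.
have efg : f = g by apply: functional_extensionality => i; exact: (projT1_eq (eqFG i)).
subst g; f_equal; apply: functional_extensionality_dep => i; exact: inj_pair2 (eqFG i).
Qed.

End TwArrow.

Section CastCod.
Variables (E : Category) (J : Type) (c : J -> E).

Definition cast_cod (X : E) (x y : J) (e : x = y) : Hom X (c y) -> Hom X (c x) :=
  match e in _ = y0 return Hom X (c y0) -> Hom X (c x) with erefl => id end.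

Lemma existT_cast_cod (X : E) (x y : J) (e : x = y) (h : Hom X (c y)) :
  existT (fun z => Hom X (c z)) x (cast_cod e h) = existT _ y h.
Proof. by case: y / e h. Qed.

Lemma cast_cod_comp (X Y : E) (x y : J) (e : x = y) (g : Hom Y (c y)) (h : Hom X Y) :
  cast_cod e (comp g h) = comp (cast_cod e g) h.
Proof. by case: y / e g. Qed.

Lemma eq_cast_cod (X : E) (x y : J) (h1 : Hom X (c x)) (h2 : Hom X (c y)) :
  existT (fun z => Hom X (c z)) x h1 = existT _ y h2 ->
  forall e : x = y, h1 = cast_cod e h2.
Proof. by move=> eqh e; case: y / e h2 eqh => h2 eqh; exact: inj_pair2 eqh. Qed.

End CastCod.

Arguments cast_cod {E J} c {X x y} e.

Section TwPullback.
Variable E : Category.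
Hypothesis pbE : pullback_or_no_cone E.
Variables (A B C : TwOb E) (F : TwHom A C) (G : TwHom B C).

Local Notation G_at e j := (cast_cod (tw_fam C) e (tw_cmp G j)).

Definition span_at (p : tw_idx A * tw_idx B) :=
  {P : E & (Hom P (tw_fam A p.1) * Hom P (tw_fam B p.2))%type}.

(* [None] records that the component cospan at [p] has no cone, including the
   case [F p.1 <> G p.2] where there is no cospan at all. *)
Definition component_pullback (p : tw_idx A * tw_idx B) (s : option (span_at p)) :=
  match s with
  | Some x => exists e, is_pullback (tw_cmp F p.1) (G_at e p.2) (projT2 x).1 (projT2 x).2
  | None => forall e (Q : E) (q1 : Hom Q _) q2, comp (tw_cmp F p.1) q1 <> comp (G_at e p.2) q2
  end.

Lemma component_pullback_exists p : exists s, component_pullback (p := p) s.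
Proof.
case: (eqVneq (tw_map F p.1) (tw_map G p.2)) => [e | neFG]; last first.
  by exists None => e; rewrite e eqxx in neFG.
case: (pbE (tw_cmp F p.1) (G_at e p.2)) => [[P [p1 [p2 pbP]]] | no_cone].
  by exists (Some (existT _ P (p1, p2))), e.
by exists None => e'; rewrite (eq_irrelevance e' e).
Qed.

Definition chosen p : option (span_at p) :=
  proj1_sig (constructive_indefinite_description _ (component_pullback_exists p)).

Lemma chosenP p : component_pullback (chosen p).
Proof. exact: proj2_sig (constructive_indefinite_description _ _). Qed.

Definition tw_pb_idx : finType := {p : tw_idx A * tw_idx B | isSome (chosen p)}.

Definition span_of (k : tw_pb_idx) : span_at (val k) := oget (valP k).

Lemma span_of_pullback (k : tw_pb_idx) :
  exists e, is_pullback (tw_cmp F (val k).1) (G_at e (val k).2)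
                        (projT2 (span_of k)).1 (projT2 (span_of k)).2.
Proof. by rewrite /span_of; have := chosenP (val k); case: (chosen (val k)) (valP k). Qed.

Definition tw_pb : TwOb E := @TwFam E tw_pb_idx (fun k => projT1 (span_of k)).

Definition tw_pb_fst : TwHom tw_pb A :=
  @TwMor E tw_pb A (fun k => (val k).1) (fun k => (projT2 (span_of k)).1).

Definition tw_pb_snd : TwHom tw_pb B :=
  @TwMor E tw_pb B (fun k => (val k).2) (fun k => (projT2 (span_of k)).2).

Lemma tw_pb_square : tw_comp F tw_pb_fst = tw_comp G tw_pb_snd.
Proof.
apply: tw_hom_ext => k; have [e [sq _]] := span_of_pullback k.
by rewrite /tw_arrow /= -(existT_cast_cod e) cast_cod_comp sq.
Qed.

Section Cone.
Variables (Q : TwOb E) (q1 : TwHom Q A) (q2 : TwHom Q B).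
Hypothesis cone : tw_comp F q1 = tw_comp G q2.

Lemma cone_arrow k : tw_arrow (tw_comp F q1) k = tw_arrow (tw_comp G q2) k.
Proof. by rewrite cone. Qed.

Lemma cone_cmp k (e : tw_map F (tw_map q1 k) = tw_map G (tw_map q2 k)) :
  comp (tw_cmp F (tw_map q1 k)) (tw_cmp q1 k) = comp (G_at e (tw_map q2 k)) (tw_cmp q2 k).
Proof. by rewrite -cast_cod_comp; apply: eq_cast_cod; exact: cone_arrow. Qed.

Lemma cone_in_idx k : isSome (chosen (tw_map q1 k, tw_map q2 k)).
Proof.
have := chosenP (tw_map q1 k, tw_map q2 k); case: (chosen _) => // no_cone.
have e := projT1_eq (cone_arrow k).
by case: (no_cone e _ _ _ (cone_cmp e)).
Qed.

Definition mediate_idx k : tw_pb_idx :=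
  exist (fun p => isSome (chosen p)) _ (cone_in_idx k).

Lemma mediate_cmp_unique k :
  exists! u : Hom (tw_fam Q k) (tw_fam tw_pb (mediate_idx k)),
    comp (tw_cmp tw_pb_fst (mediate_idx k)) u = tw_cmp q1 k /\
    comp (tw_cmp tw_pb_snd (mediate_idx k)) u = tw_cmp q2 k.
Proof.
have [e [_ univ]] := span_of_pullback (mediate_idx k).
exact: univ _ _ _ (cone_cmp e).
Qed.

Definition mediate : TwHom Q tw_pb :=
  @TwMor E Q tw_pb mediate_idx
    (fun k => proj1_sig (constructive_indefinite_description _ (mediate_cmp_unique k))).

Lemma mediate_spec k :
  (comp (tw_cmp tw_pb_fst (mediate_idx k)) (tw_cmp mediate k) = tw_cmp q1 k /\
   comp (tw_cmp tw_pb_snd (mediate_idx k)) (tw_cmp mediate k) = tw_cmp q2 k) /\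
  forall u, comp (tw_cmp tw_pb_fst (mediate_idx k)) u = tw_cmp q1 k /\
            comp (tw_cmp tw_pb_snd (mediate_idx k)) u = tw_cmp q2 k ->
            tw_cmp mediate k = u.
Proof. exact: proj2_sig (constructive_indefinite_description _ (mediate_cmp_unique k)). Qed.

Lemma mediate_unique (u : TwHom Q tw_pb) :
  tw_comp tw_pb_fst u = q1 -> tw_comp tw_pb_snd u = q2 -> mediate = u.
Proof.
move=> u1 u2; apply: tw_hom_ext => k.
have a1 : tw_arrow (tw_comp tw_pb_fst u) k = tw_arrow q1 k by rewrite u1.
have a2 : tw_arrow (tw_comp tw_pb_snd u) k = tw_arrow q2 k by rewrite u2.
have eq_idx : tw_map u k = mediate_idx k.
  apply: val_inj; rewrite /= -[tw_map q1 k](projT1_eq a1) -[tw_map q2 k](projT1_eq a2).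
  exact: surjective_pairing.
move: a1 a2; rewrite /tw_arrow /=.
move: (tw_cmp u k) eq_idx; move: (tw_map u k) => j c eq_idx; subst j; move=> a1 a2.
apply: f_equal; apply: (mediate_spec k).2.
by split; [exact: inj_pair2 _ _ _ _ _ a1 | exact: inj_pair2 _ _ _ _ _ a2].
Qed.

End Cone.

Lemma tw_pb_is_pullback : is_pullback (C := Tw E) F G tw_pb_fst tw_pb_snd.
Proof.
split; first exact: tw_pb_square.
move=> Q q1 q2 cone; exists (mediate cone); split; last first.
  by move=> u [u1 u2]; apply: mediate_unique.
by split; apply: tw_hom_ext => k; have [[m1 m2] _] := mediate_spec cone k;
  rewrite /tw_arrow /= ?m1 ?m2.
Qed.

End TwPullback.

Lemma tw_has_pullbacks (E : Category) : pullback_or_no_cone E -> has_pullbacks (Tw E).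
Proof.
move=> pbE X Y Z F G; exists (tw_pb pbE F G), (tw_pb_fst pbE F G), (tw_pb_snd pbE F G).
exact: tw_pb_is_pullback.
Qed.

Lemma fullsub_is_pullback (D : Category) (S : D -> Prop) (X Y Z P : FullSub S)
    (f : Hom X Z) (g : Hom Y Z) (p1 : Hom P X) (p2 : Hom P Y) :
  is_pullback (C := D) f g p1 p2 -> is_pullback (C := FullSub S) f g p1 p2.
Proof. by case=> sq univ; split=> // Q; apply: univ. Qed.

Lemma complement_pullback_or_no_cone (D : Category) (inC : D -> Prop) :
  has_pullbacks D -> (forall A B : D, inC A -> Hom B A -> inC B) ->
  pullback_or_no_cone (FullSub (fun x : D => ~ inC x)).
Proof.
move=> pbD downC X Y Z f g.
have [P [p1 [p2 pbP]]] := pbD _ _ _ f g.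
case: (classic (inC P)) => [CP | notCP]; [right | left].
  move=> Q q1 q2 sq; case: (pbP) => _ /(_ _ q1 q2 sq) [u _].
  exact: (proj2_sig Q) (downC _ _ CP u).
by exists (exist _ P notCP), p1, p2; exact: fullsub_is_pullback.
Qed.

Theorem mainTheorem4 (D : Category) (inC : D -> Prop) :
  has_pullbacks D ->
  (forall A B : D, inC A -> isomorphic A B -> inC B) ->
  (forall (A B : D), inC A -> Hom B A -> inC B) ->
  has_pullbacks (Tw (FullSub (fun x : D => ~ inC x))).
Proof.
move=> pbD _ downC; apply: tw_has_pullbacks.
exact: complement_pullback_or_no_cone.
Qed.
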